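(* Let $d\ge 2$ be an integer, $F\in(0,1]$ and $k\in(0,1)$. For each integer $n\ge 1$ let $C_n$ be $\sum_s\frac{4\lambda^+_s\lambda^-_s}{\lambda^+_s+\lambda^-_s}$ computed from the eigenvalues of the $nd$-qubit depolarized GHZ state with fidelity $k^{n-1}F$ (terms with $\lambda^+_s+\lambda^-_s=0$ taken to be $0$). Then $$\lim_{n\to\infty} d\,(1-C_n)\,n^2=0.$$
   Context: The $N$-qubit depolarized GHZ state with fidelity $G\in[0,1]$ is $G|\mathrm{GHZ}_N\rangle\langle\mathrm{GHZ}_N|+\frac{1-G}{2^N-1}(I-|\mathrm{GHZ}_N\rangle\langle\mathrm{GHZ}_N|)$ with $|\mathrm{GHZ}_N\rangle=(|0\cdots0\rangle+|1\cdots1\rangle)/\sqrt2$. It is diagonal in the GHZ basis $|G^\pm_s\rangle=(|s\rangle\pm|\bar s\rangle)/\sqrt2$, where $s$ ranges over one representative of each pair $\{s,\bar s\}$ of complementary bit strings of length $N$, with eigenvalues $\lambda^\pm_s$. The quantity $d(1-C_n)n^2$ is the quantum Fisher information for estimating the normalized average $\frac{1}{\sqrt d}\sum_i x_i$ of phases encoded by $\exp[-i\sum_i x_iH_i]$, $H_i=\frac12\sum_{k}\sigma_z^{(i,k)}$ on the $n$ qubits of node $i$. *)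

From HB Require Import structures.
From mathcomp Require Import all_boot all_order all_algebra.
From mathcomp Require Import all_classical all_reals all_analysis.
Set Implicit Arguments. Unset Strict Implicit. Unset Printing Implicit Defensive.
Import Order.TTheory GRing.Theory Num.Theory.
Local Open Scope ring_scope.

(* Computational basis of N qubits: bit strings of length N. *)
Definition bits (N : nat) := {ffun 'I_N -> bool}.

Section GHZ.
Variables (R : realType) (N : nat).

Definition zeros : bits N := [ffun => false].
Definition ones : bits N := [ffun => true].
Definition compl (s : bits N) : bits N := [ffun i => ~~ s i].

Definition ghz (x : bits N) : R :=
  ((x == zeros)%:R + (x == ones)%:R) / Num.sqrt 2.

(* depolarized GHZ state with fidelity G, as a matrix kernel on bits N:
   G |GHZ><GHZ| + (1-G)/(2^N-1) (I - |GHZ><GHZ|) *)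
Definition depol_ghz (G : R) (x y : bits N) : R :=
  G * (ghz x * ghz y)
  + (1 - G) / ((2 ^ N)%:R - 1) * ((x == y)%:R - ghz x * ghz y).

(* GHZ basis vector |G^{+/-}_s> = (|s> +/- |s bar>)/sqrt 2;
   sgn = true for +, false for - *)
Definition ghz_basis (sgn : bool) (s : bits N) (x : bits N) : R :=
  ((x == s)%:R + (if sgn then 1 else -1) * (x == compl s)%:R) / Num.sqrt 2.

(* eigenvalue lambda^{+/-}_s = <G^{+/-}_s| rho |G^{+/-}_s> (rho is diagonal
   in the GHZ basis) *)
Definition ghz_eig (G : R) (sgn : bool) (s : bits N) : R :=
  \sum_x \sum_y ghz_basis sgn s x * depol_ghz G x y * ghz_basis sgn s y.

(* one representative of each pair {s, s bar}: the strings whose first bit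
   is 0 *)
Definition ghz_rep (s : bits N) : bool :=
  [forall i : 'I_N, (val i == 0%N) ==> ~~ s i].

Definition Cterm (a b : R) : R :=
  if a + b == 0 then 0 else 4 * a * b / (a + b).

Definition C_ghz (G : R) : R :=
  \sum_(s : bits N | ghz_rep s) Cterm (ghz_eig G true s) (ghz_eig G false s).

End GHZ.

Definition C_seq (R : realType) (d : nat) (F k : R) (n : nat) : R :=
  C_ghz (n * d) (k ^+ n.-1 * F).

(* In the GHZ basis the depolarized state is (G - c) |GHZ><GHZ| + c I with
   c = (1 - G) / (2^N - 1): its eigenvalues are lambda^+_0 = G and c everywhere else.
   Summing over the 2^(N-1) representatives gives
   1 - C = G + c - 4Gc / (G + c) = (G - c)^2 / (G + c), which lies in [0, G + c],
   and c <= 2^(1-N). For the n-th state G = k^(n-1) F and N = n d, so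
   d (1 - C_n) n^2 is squeezed between 0 and a combination of n^2 k^n and n^2 2^-n.
   These vanish because, for 0 <= u < 1, n u^n <= 1 + u + ... + u^(n-1) <= 1/(1 - u),
   so n z^n = (n u^n) u^n -> 0 for u = sqrt z, and n^2 z^n = (n u^n)^2. *)

From HB Require Import structures.
From mathcomp Require Import all_boot all_order all_algebra.
From mathcomp Require Import all_classical all_reals all_analysis.
From mathcomp Require Import ring lra.
Set Implicit Arguments.
Unset Strict Implicit.
Unset Printing Implicit Defensive.
Import Order.TTheory GRing.Theory Num.Theory numFieldNormedType.Exports.
Local Open Scope ring_scope.

Lemma sum_eq_indicator_mul (R : pzSemiRingType) (T : finType) (a : T) (f : T -> R) :
  \sum_x (x == a)%:R * f x = f a.
Proof.
rewrite (eq_bigr (fun x => if x == a then f x else 0)) => [|x _].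
  by rewrite -big_mkcond big_pred1_eq.
by case: eqP; rewrite ?mul1r ?mul0r.
Qed.

Lemma quadratic_form_rank_one_shift (R : comNzRingType) (T : finType)
    (a c : R) (u v : T -> R) :
  \sum_x \sum_y v x * (a * (u x * u y) + c * (x == y)%:R) * v y =
  a * (\sum_x v x * u x) ^+ 2 + c * \sum_x v x ^+ 2.
Proof.
rewrite expr2 big_distrl /= mulr_sumr mulr_sumr -big_split /=.
apply: eq_bigr => x _; rewrite big_distrr /=.
transitivity (\sum_y ((y == x)%:R * (c * v x * v y) + a * (v x * u x * (v y * u y)))).
  by apply: eq_bigr => y _; rewrite eq_sym; ring.
by rewrite big_split /= sum_eq_indicator_mul -big_distrr /=; ring.
Qed.

Lemma Cterm_same (R : realType) (c : R) : Cterm c c = 2 * c.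
Proof. by rewrite /Cterm; case: eqP => [c2_eq0|/eqP c2_neq0]; [lra | field]. Qed.

Lemma Cterm_ge0 (R : realType) (a b : R) : 0 <= a -> 0 <= b -> 0 <= Cterm a b.
Proof.
move=> a_ge0 b_ge0; rewrite /Cterm; case: eqP => // _.
by rewrite divr_ge0 ?addr_ge0 // !mulr_ge0.
Qed.

Lemma Cterm_le_add (R : realType) (a b : R) : 0 <= a -> 0 <= b -> Cterm a b <= a + b.
Proof.
move=> a_ge0 b_ge0; rewrite /Cterm; case: eqP => [->|/eqP ab_neq0] //.
have ab_gt0 : 0 < a + b by rewrite lt_def ab_neq0 addr_ge0.
rewrite ler_pdivrMr // -subr_ge0.
have -> : (a + b) * (a + b) - 4 * a * b = (a - b) ^+ 2 by ring.
exact: sqr_ge0.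
Qed.

Section GHZSpectrum.
Variables (R : realType) (N : nat).

Local Notation pm b := (if b then 1 else -1 : R).
Local Notation r2 := (Num.sqrt (2 : R)).

Definition depol_noise (G : R) : R := (1 - G) / ((2 ^ N)%:R - 1).

Lemma depol_ghzE G (x y : bits N) : depol_ghz G x y =
  (G - depol_noise G) * (ghz R x * ghz R y) + depol_noise G * (x == y)%:R.
Proof. by rewrite /depol_ghz /depol_noise; ring. Qed.

Lemma sum_ghz_basis_mul sgn (s : bits N) (h : bits N -> R) :
  \sum_x ghz_basis R sgn s x * h x = (h s + pm sgn * h (compl s)) / r2.
Proof.
rewrite /ghz_basis.
transitivity (\sum_x ((x == s)%:R * (h x / r2) + (x == compl s)%:R * (pm sgn * h x / r2))).
  by apply: eq_bigr => x _; case: sgn; ring.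
by rewrite big_split /= !sum_eq_indicator_mul; ring.
Qed.

Lemma ghz_eigE G sgn (s : bits N) : ghz_eig G sgn s =
  (G - depol_noise G) * (\sum_x ghz_basis R sgn s x * ghz R x) ^+ 2
  + depol_noise G * \sum_x ghz_basis R sgn s x ^+ 2.
Proof.
rewrite /ghz_eig -quadratic_form_rank_one_shift.
by apply: eq_bigr => x _; apply: eq_bigr => y _; rewrite depol_ghzE.
Qed.

Hypothesis N_gt0 : (0 < N)%N.
Let i0 : 'I_N := Ordinal N_gt0.

Lemma complK : involutive (@compl N).
Proof. by move=> s; apply/ffunP => i; rewrite !ffunE negbK. Qed.

Lemma compl_zeros : compl (zeros N) = ones N.
Proof. by apply/ffunP => i; rewrite !ffunE. Qed.

Lemma neq_compl (s : bits N) : s != compl s.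
Proof. by apply/eqP => /ffunP /(_ i0); rewrite ffunE; case: (s i0). Qed.

Lemma zeros_neq_ones : zeros N != ones N.
Proof. by rewrite -compl_zeros neq_compl. Qed.

Lemma ghz_repE (s : bits N) : ghz_rep s = ~~ s i0.
Proof.
apply/forallP/idP => [/(_ i0) //|s_i0 i]; apply/implyP => /eqP i_0.
by have -> : i = i0 by apply: val_inj.
Qed.

Lemma card_ghz_rep : (#|[set s : bits N | ghz_rep s]|.*2 = 2 ^ N)%N.
Proof.
have rep_compl : ~: [set s | ghz_rep s] = @compl N @^-1: [set s : bits N | ghz_rep s].
  by apply/setP => s; rewrite !inE !ghz_repE ffunE negbK.
rewrite -addnn -{2}(card_preimset _ (can_inj complK)) -rep_compl cardsC.
by rewrite card_ffun card_bool card_ord.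
Qed.

Lemma ghz_basis_norm sgn (s : bits N) : \sum_x ghz_basis R sgn s x ^+ 2 = 1.
Proof.
have s_neq : (s == compl s) = false by apply: negbTE; exact: neq_compl.
have s_neq' : (compl s == s) = false by rewrite eq_sym.
have r2_sq : r2 ^+ 2 = 2 by rewrite sqr_sqrtr.
under eq_bigr do rewrite expr2.
rewrite sum_ghz_basis_mul /ghz_basis !eqxx s_neq s_neq'.
transitivity (2 * r2^-1 ^+ 2); first by case: sgn => /=; ring.
by rewrite exprVn r2_sq divff.
Qed.

Lemma ghz_eq0 (x : bits N) : x != zeros N -> x != ones N -> ghz R x = 0.
Proof. by move=> /negbTE x_nz /negbTE x_no; rewrite /ghz x_nz x_no /= addr0 mul0r. Qed.

Lemma ghz_zeros : ghz R (zeros N) = r2^-1.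
Proof. by rewrite /ghz eqxx (negbTE zeros_neq_ones) /= addr0 mul1r. Qed.

Lemma ghz_ones : ghz R (ones N) = r2^-1.
Proof. by rewrite /ghz eqxx eq_sym (negbTE zeros_neq_ones) /= add0r mul1r. Qed.

Lemma ghz_eig_zeros G sgn :
  ghz_eig G sgn (zeros N) = if sgn then G else depol_noise G.
Proof.
have overlap : \sum_x ghz_basis R sgn (zeros N) x * ghz R x = (1 + pm sgn) / 2.
  rewrite sum_ghz_basis_mul compl_zeros ghz_zeros ghz_ones.
  transitivity ((1 + pm sgn) * r2^-1 ^+ 2); first by case: sgn; ring.
  by rewrite exprVn sqr_sqrtr.
by rewrite ghz_eigE ghz_basis_norm overlap {overlap}; case: sgn; field.
Qed.

Lemma ghz_eig_rep G sgn (s : bits N) : ghz_rep s -> s != zeros N ->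
  ghz_eig G sgn s = depol_noise G.
Proof.
rewrite ghz_repE => s_i0 s_nz.
have s_no : s != ones N by apply: contraNneq s_i0 => ->; rewrite ffunE.
have cs_nz : compl s != zeros N.
  by apply: contraNneq s_i0 => /ffunP/(_ i0); rewrite !ffunE => /negbFE.
have cs_no : compl s != ones N.
  by apply: contraNneq s_nz => cs_ones; rewrite -[s]complK cs_ones -compl_zeros complK.
rewrite ghz_eigE ghz_basis_norm sum_ghz_basis_mul !ghz_eq0 //.
by case: sgn; ring.
Qed.

Lemma two_pow_ge2 : 2 <= (2 ^ N)%:R :> R.
Proof. by rewrite ler_nat -{1}(expn1 2) leq_pexp2l. Qed.

Lemma depol_noise_mul G : depol_noise G * ((2 ^ N)%:R - 1) = 1 - G.
Proof.
have two_pow_gt1 : 1 < (2 ^ N)%:R :> R by rewrite (lt_le_trans _ two_pow_ge2) ?ltr1n.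
by rewrite /depol_noise divfK // subr_eq0 gt_eqF.
Qed.

Lemma one_sub_C_ghz (G : R) :
  1 - C_ghz N G = G + depol_noise G - Cterm G (depol_noise G).
Proof.
set c := depol_noise G.
have zeros_rep : ghz_rep (zeros N) by rewrite ghz_repE ffunE.
have C_split : C_ghz N G = Cterm G c + \sum_(s | ghz_rep s && (s != zeros N)) 2 * c.
  rewrite /C_ghz (bigD1 (zeros N)) //= !ghz_eig_zeros; congr (_ + _).
  by apply: eq_bigr => s /andP[s_rep s_nz]; rewrite !ghz_eig_rep // Cterm_same.
have rep_sum : \sum_(s : bits N | ghz_rep s) 2 * c = c * (2 ^ N)%:R.
  rewrite (eq_bigl [in [set s : bits N | ghz_rep s]]) => [|s]; last by rewrite inE.
  rewrite sumr_const -mulr_natr -card_ghz_rep -mul2n natrM; ring.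
rewrite (bigD1 (zeros N)) //= in rep_sum.
have noise_mul : c * ((2 ^ N)%:R - 1) = 1 - G := depol_noise_mul G.
rewrite C_split; lra.
Qed.

Lemma one_sub_C_ghz_bounds (G : R) : 0 <= G -> G <= 1 ->
  0 <= 1 - C_ghz N G <= G + 2 / (2 ^ N)%:R.
Proof.
move=> G_ge0 G_le1; rewrite one_sub_C_ghz.
set c := depol_noise G; set P : R := (2 ^ N)%:R.
have noise_mul : c * (P - 1) = 1 - G := depol_noise_mul G.
have P_ge2 : 2 <= P := two_pow_ge2.
have c_ge0 : 0 <= c by rewrite divr_ge0 ?subr_ge0 //; lra.
have c_le : c <= 2 / P by rewrite ler_pdivlMr; nra.
have := Cterm_ge0 G_ge0 c_ge0; have := Cterm_le_add G_ge0 c_ge0.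
lra.
Qed.

End GHZSpectrum.

Local Open Scope classical_set_scope.

Lemma natr_mul_expr_le (R : numFieldType) (z : R) n :
  0 <= z -> z < 1 -> n%:R * z ^+ n <= (1 - z)^-1.
Proof.
move=> z_ge0 z_lt1.
have geom : (\sum_(i < n) z ^+ i) * (1 - z) = 1 - z ^+ n.
  by rewrite -[1 - z ^+ n]opprB subrX1 -mulNr opprB mulrC.
have le_geom : n%:R * z ^+ n <= \sum_(i < n) z ^+ i.
  rewrite mulr_natl -[n in _ *+ n]card_ord -sumr_const; apply: ler_sum => i _.
  by apply: ler_wiXn2l => //; [exact: ltW | exact: ltnW].
rewrite -div1r ler_pdivlMr ?subr_gt0 //; apply: (le_trans (ler_wpM2r _ le_geom)).
  by rewrite subr_ge0 ltW.
by rewrite geom gerBl exprn_ge0.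
Qed.

Section PolynomialTimesGeometric.
Variable R : realType.

Lemma expr_sqrtr (z : R) n : 0 <= z -> z ^+ n = Num.sqrt z ^+ n * Num.sqrt z ^+ n.
Proof. by move=> z_ge0; rewrite -exprMn -expr2 sqr_sqrtr. Qed.

Lemma cvg_natr_mul_expr (z : R) : 0 <= z -> z < 1 ->
  n%:R * z ^+ n @[n --> \oo] --> 0.
Proof.
move=> z_ge0 z_lt1; set u := Num.sqrt z.
have u_ge0 : 0 <= u by exact: sqrtr_ge0.
have u_lt1 : u < 1 by rewrite -sqrtr1 ltr_sqrt.
have bound_cvg : (1 - u)^-1 * u ^+ n @[n --> \oo] --> 0.
  by rewrite -(mulr0 (1 - u)^-1); apply: cvgMl_tmp; apply: cvg_expr; rewrite ger0_norm.
apply: (squeeze_cvgr _ (cvg_cst 0) bound_cvg); near=> n.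
rewrite mulr_ge0 ?exprn_ge0 //= (expr_sqrtr n z_ge0) -/u mulrA.
by rewrite ler_wpM2r ?exprn_ge0 ?natr_mul_expr_le.
Unshelve. all: end_near.
Qed.

Lemma cvg_natr_sqr_mul_expr (z : R) : 0 <= z -> z < 1 ->
  n%:R ^+ 2 * z ^+ n @[n --> \oo] --> 0.
Proof.
move=> z_ge0 z_lt1; set u := Num.sqrt z.
have u_ge0 : 0 <= u by exact: sqrtr_ge0.
have u_lt1 : u < 1 by rewrite -sqrtr1 ltr_sqrt.
have -> : (fun n => n%:R ^+ 2 * z ^+ n) =
    (fun n => n%:R * u ^+ n) \* (fun n => n%:R * u ^+ n).
  by apply/funext => n; rewrite /= (expr_sqrtr n z_ge0); ring.
have prod_cvg := cvgM (cvg_natr_mul_expr u_ge0 u_lt1) (cvg_natr_mul_expr u_ge0 u_lt1).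
rewrite mulr0 in prod_cvg; exact: prod_cvg.
Qed.

End PolynomialTimesGeometric.

Lemma one_sub_C_seq_bounds (R : realType) (d : nat) (F k : R) n :
  (0 < d)%N -> (0 < n)%N -> 0 <= F -> F <= 1 -> 0 < k -> k <= 1 ->
  0 <= 1 - C_seq d F k n <= k ^+ n / k + 2 * 2^-1 ^+ n.
Proof.
move=> d_gt0 n_gt0 F_ge0 F_le1 k_gt0 k_le1.
have nd_gt0 : (0 < n * d)%N by rewrite muln_gt0 n_gt0.
have kn1_ge0 : 0 <= k ^+ n.-1 by rewrite exprn_ge0 ?ltW.
have G_ge0 : 0 <= k ^+ n.-1 * F by rewrite mulr_ge0.
have G_le1 : k ^+ n.-1 * F <= 1 by rewrite mulr_ile1 // exprn_ile1 // ltW.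
have G_le : k ^+ n.-1 * F <= k ^+ n / k.
  rewrite -[in k ^+ n](prednK n_gt0) exprSr mulfK ?gt_eqF //.
  by rewrite -[X in _ <= X]mulr1 ler_wpM2l.
have noise_le : 2 / (2 ^ (n * d))%:R <= 2 * 2^-1 ^+ n :> R.
  rewrite exprVn -natrX ler_wpM2l // lef_pV2 ?posrE ?ltr0n ?expn_gt0 //.
  by rewrite ler_nat leq_pexp2l // leq_pmulr.
have /andP[C_ge0 C_le] := one_sub_C_ghz_bounds nd_gt0 G_ge0 G_le1.
by rewrite /C_seq C_ge0 /=; lra.
Qed.

Theorem mainTheorem5 (R : realType) (d : nat) (F k : R) :
  (2 <= d)%N -> 0 < F -> F <= 1 -> 0 < k -> k < 1 ->
  ((fun n : nat => d%:R * (1 - C_seq d F k n) * (n%:R) ^+ 2) : R^nat) @ \oo --> 0.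
Proof.
move=> d_ge2 F_gt0 F_le1 k_gt0 k_lt1.
have half_ge0 : 0 <= 2^-1 :> R by rewrite invr_ge0.
have half_lt1 : 2^-1 < 1 :> R by rewrite invf_lt1 ?ltr1n.
have bound_cvg : d%:R / k * (n%:R ^+ 2 * k ^+ n)
    + 2 * d%:R * (n%:R ^+ 2 * 2^-1 ^+ n) @[n --> \oo] --> 0.
  rewrite -[X in _ --> X](addr0 0) -[X in _ --> X + _](mulr0 (d%:R / k)).
  rewrite -[X in _ --> _ + X](mulr0 (2 * d%:R)).
  apply: cvgD; apply: cvgMl_tmp; apply: cvg_natr_sqr_mul_expr => //; exact: ltW.
apply: (squeeze_cvgr _ (cvg_cst 0) bound_cvg); near=> n.
have n_gt0 : (0 < n)%N by near: n; exact: nbhs_infty_gt.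
have /andP[C_ge0 C_le] :=
  one_sub_C_seq_bounds (ltnW d_ge2) n_gt0 (ltW F_gt0) F_le1 k_gt0 (ltW k_lt1).
have -> : d%:R / k * (n%:R ^+ 2 * k ^+ n) + 2 * d%:R * (n%:R ^+ 2 * 2^-1 ^+ n) =
  d%:R * (k ^+ n / k + 2 * 2^-1 ^+ n) * n%:R ^+ 2 by ring.
by rewrite !mulr_ge0 //= ler_wpM2r ?exprn_ge0 ?ler_wpM2l.
Unshelve. all: end_near.
Qed.
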